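(* Let $m$ and $n$ be positive integers and let $\alpha\in[0,1]$ be rational such that $\alpha nm$ is an integer. Let $E=(C,V)$ be an approval election with $m$ candidates, $n$ voters and $\mathrm{satr}(E)=\alpha$. If for each two candidates $c_j,c_k\in C$ we have $\big||A(c_j)|-|A(c_k)|\big|\le 1$, then $\mathrm{ehd}(E)$ is largest among all elections with $m$ candidates, $n$ voters and saturation $\alpha$.
   Context: An (approval) election is $E=(C,V)$ with $C=\{c_1,\dots,c_m\}$ and voters $V=(v_1,\dots,v_n)$, each vote a binary vector in $\{0,1\}^m$; $A(c)$ is the set of voters approving candidate $c$ and $A(v)$ the set of candidates approved by vote $v$. $\mathrm{satr}(E)=\frac{1}{nm}\sum_{v\in V}|A(v)|$. $\mathrm{ham}(u,v)=\sum_j|u[j]-v[j]|$, and $\mathrm{ehd}(E)=\sum_{u\in V}\sum_{v\in V}\mathrm{ham}(u,v)$ (over all ordered pairs of voters). *)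

From mathcomp Require Import all_boot all_order all_algebra.
Set Implicit Arguments. Unset Strict Implicit. Unset Printing Implicit Defensive.
Import Order.TTheory GRing.Theory Num.Theory.

(* An approval election with n voters and m candidates: E v j = true iff
   voter v approves candidate j. *)
Definition election (n m : nat) := {ffun 'I_n -> {ffun 'I_m -> bool}}.

Definition approvals_of_voter n m (E : election n m) (v : 'I_n) : nat :=
  #|[set j : 'I_m | E v j]|.

Definition approvals_of_cand n m (E : election n m) (c : 'I_m) : nat :=
  #|[set v : 'I_n | E v c]|.

Definition satr n m (E : election n m) : rat :=
  ((\sum_(v < n) approvals_of_voter E v)%:R / (n * m)%:R)%R.

Definition ham m (u w : {ffun 'I_m -> bool}) : nat :=
  \sum_(j < m) (u j != w j).

Definition ehd n m (E : election n m) : nat :=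
  \sum_(u < n) \sum_(w < n) ham (E u) (E w).

From mathcomp Require Import all_boot all_order all_algebra.
From mathcomp Require Import zify ring.
Import Order.TTheory GRing.Theory Num.Theory.

(* Exchanging sums, ehd(E) = 2 * sum_j |A(c_j)| (n - |A(c_j)|), while
   sum_j |A(c_j)| = satr(E) n m is fixed by the saturation.  On integers the
   concave map x |-> x (n - x) lies below its secant through q and q + 1 and
   meets it exactly at q and q + 1; as the secant is affine, its sum over the
   candidates only depends on the total number of approvals.  A profile whose
   approval counts all lie in {q, q + 1} therefore attains the bound. *)

Lemma sum_nat_boolE {T : finType} (P : pred T) :
  \sum_(i : T) (P i : nat) = #|[set i | P i]|.
Proof. by rewrite -sum1dep_card [RHS]big_mkcond; apply: eq_bigr => i _; case: (P i). Qed.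

Lemma sum_pairs_neq (T : finType) (b : T -> bool) :
  \sum_(u : T) \sum_(w : T) (b u != b w : nat) =
  2 * (#|[set u | b u]| * (#|T| - #|[set u | b u]|)).
Proof.
have neqE u w : (b u != b w : nat) = b u * ~~ b w + ~~ b u * b w.
  by case: (b u); case: (b w).
have cardT : #|T| = \sum_(u : T) (b u : nat) + \sum_(u : T) (~~ b u : nat).
  by rewrite -sum1_card -big_split; apply: eq_bigr => u _; case: (b u).
under eq_bigr do under eq_bigr do rewrite neqE.
under eq_bigr do rewrite big_split /=.
rewrite big_split /= -!big_distrlr /= cardT -sum_nat_boolE addKn.
by rewrite [X in _ + X]mulnC addnn -mul2n.
Qed.

Lemma ehd_candE n m (E : election n m) :
  ehd E = 2 * \sum_(j < m) approvals_of_cand E j * (n - approvals_of_cand E j).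
Proof.
rewrite /ehd /ham big_distrr /=.
under eq_bigr do rewrite exchange_big.
rewrite exchange_big; apply: eq_bigr => j _.
by rewrite sum_pairs_neq card_ord.
Qed.

Lemma approvals_of_cand_le n m (E : election n m) j : approvals_of_cand E j <= n.
Proof. by rewrite -[n in _ <= n]card_ord max_card. Qed.

Lemma sum_approvals_voterE n m (E : election n m) :
  \sum_(v < n) approvals_of_voter E v = \sum_(j < m) approvals_of_cand E j.
Proof.
under eq_bigr do rewrite /approvals_of_voter -(sum_nat_boolE (E _)).
under [RHS]eq_bigr do rewrite /approvals_of_cand -(sum_nat_boolE (E^~ _)).
exact: exchange_big.
Qed.

Lemma satr_eq_sum_approvals {n m : nat} {E E' : election n m} :
  (0 < n)%N -> (0 < m)%N -> satr E = satr E' ->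
  \sum_(j < m) approvals_of_cand E j = \sum_(j < m) approvals_of_cand E' j.
Proof.
move=> n_gt0 m_gt0; rewrite /satr !sum_approvals_voterE => /eqP.
have nm_neq0 : ((n * m)%:R != 0 :> rat)%R.
  by rewrite pnatr_eq0 -lt0n muln_gt0 n_gt0 m_gt0.
by rewrite (inj_eq (mulIf (invr_neq0 nm_neq0))) eqr_nat => /eqP.
Qed.

Section Secant.
Local Open Scope ring_scope.

(* The secant of x |-> x (N - x) through the abscissae q and q + 1. *)
Definition secant (N q x : int) : int := (N - (2 * q + 1)) * x + q * (q + 1).

Lemma le_secant (N q x : int) : x * (N - x) <= secant N q x.
Proof.
have gap_ge0 : 0 <= (x - q) * (x - q - 1).
  by have [x_le_q | q_lt_x] := lerP x q; [apply: mulr_le0 | apply: mulr_ge0]; lia.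
by rewrite -subr_ge0 (_ : _ - _ = (x - q) * (x - q - 1)) //; rewrite /secant; ring.
Qed.

Lemma secant_eq (N q x : int) : x = q \/ x = q + 1 -> x * (N - x) = secant N q x.
Proof. by rewrite /secant => -[] ->; ring. Qed.

Lemma eq_sum_secant (I : finType) (N q : int) (x y : I -> int) :
  \sum_i x i = \sum_i y i -> \sum_i secant N q (x i) = \sum_i secant N q (y i).
Proof. by move=> eq_sum; rewrite !big_split /= -!mulr_sumr eq_sum. Qed.

End Secant.

Lemma sum_mul_subn_le_balanced (I : finType) (n q : nat) (a b : I -> nat) :
  (forall i, a i = q \/ a i = q.+1) -> (forall i, a i <= n) -> (forall i, b i <= n) ->
  \sum_i a i = \sum_i b i ->
  \sum_i b i * (n - b i) <= \sum_i a i * (n - a i).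
Proof.
move=> a_two_values a_le_n b_le_n eq_sum.
have Posz_sum (x : I -> nat) : Posz (\sum_i x i) = (\sum_i Posz (x i))%R.
  exact: (big_morph Posz PoszD).
have mul_subnE x : x <= n -> Posz (x * (n - x)) = (Posz x * (Posz n - Posz x))%R.
  by move=> x_le_n; rewrite PoszM subzn.
have a_secant i : Posz (a i * (n - a i)) = secant n q (a i).
  by rewrite mul_subnE // (secant_eq n q) //; have := a_two_values i; lia.
rewrite -lez_nat !Posz_sum (eq_bigr _ (fun i _ => a_secant i)).
rewrite (@eq_sum_secant _ n q (fun i => Posz (a i)) (fun i => Posz (b i))).
  by apply: ler_sum => i _; rewrite mul_subnE ?le_secant.
by rewrite -!Posz_sum eq_sum.
Qed.

Lemma near_balanced_two_values {I : finType} {a : I -> nat} (i0 : I) :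
  (forall j k, (`|Posz (a j) - Posz (a k)| <= 1)%R) ->
  exists q, forall j, a j = q \/ a j = q.+1.
Proof.
move=> near_balanced; have [i _ a_min] := arg_minnP a (erefl (predT i0)).
by exists (a i) => j; have := a_min j isT; have := near_balanced j i; lia.
Qed.

Theorem lemma3 (m n : nat) (alpha : rat) :
  (0 < m)%N -> (0 < n)%N ->
  (0 <= alpha <= 1)%R ->
  (alpha * (n * m)%:R)%R \is a Num.int ->
  forall E : election n m,
    satr E = alpha ->
    (forall j k : 'I_m,
        (`| (approvals_of_cand E j)%:Z - (approvals_of_cand E k)%:Z | <= 1)%R) ->
    forall E' : election n m, satr E' = alpha -> (ehd E' <= ehd E)%N.
Proof.
(* The hypotheses on alpha only ensure that elections of saturation alpha exist. *)
move=> m_gt0 n_gt0 _ _ E satrE near_balanced E' satrE'.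
have [q two_values] := near_balanced_two_values (Ordinal m_gt0) near_balanced.
have eq_total := satr_eq_sum_approvals n_gt0 m_gt0 (etrans satrE (esym satrE')).
rewrite !ehd_candE leq_mul2l /=.
by apply: sum_mul_subn_le_balanced two_values _ _ eq_total => j; apply: approvals_of_cand_le.
Qed.
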